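(* Let $\mathsf{L}\in\{\mathsf{InqL},\mathbf{PT}\}$ and let $X$ be a nonempty team on a finite set $\{p_1,\dots,p_n\}$ of propositional variables. Then the formula $\Theta_X=\neg\neg\bigvee_{v\in X}(p_1^{v(p_1)}\wedge\dots\wedge p_n^{v(p_n)})$ is $\mathcal{F}$-projective in $\mathsf{L}$, where $\mathcal{F}$ is the class of all flat substitutions of $\mathsf{L}$.
   Context: Here $p^1:=p$, $p^0:=\neg p$, and a team on $V$ is a set of functions $V\to\{0,1\}$. A valuation is a function $v:\mathrm{Prop}\to\{0,1\}$ on the set Prop of propositional variables; a team is a set of valuations. Formulas of $\mathbf{PT}$: $\phi::=p\mid\bot\mid\top\mid\,=\!(\phi_1,\dots,\phi_n,\phi)\mid\neg\phi\mid\phi\wedge\phi\mid\phi\otimes\phi\mid\phi\vee\phi\mid\phi\to\phi$; formulas of $\mathsf{InqL}$ are built from $p,\bot,\top$ by $\wedge,\vee,\to$, with $\neg\phi:=\phi\to\bot$. Satisfaction on a team $X$: $X\models p$ iff $v(p)=1$ for all $v\in X$; $X\models\bot$ iff $X=\emptyset$; $X\models\top$ always; $\wedge$ conjunction; $X\models\phi\otimes\psi$ iff $X=Y\cup Z$ with $Y\models\phi$, $Z\models\psi$; $X\models\phi\vee\psi$ iff $X\models\phi$ or $X\models\psi$; $X\models\phi\to\psi$ iff every $Y\subseteq X$ with $Y\models\phi$ satisfies $\psi$; $X\models\neg\phi$ iff $\{v\}\not\models\phi$ for all $v\in X$; $X\models\,=\!(\phi_1,\dots,\phi_n,\psi)$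 iff $X\models\bigwedge_i(\phi_i\vee(\phi_i\to\bot))\to(\psi\vee(\psi\to\bot))$. For finite $\Gamma$, $\Gamma\vdash_{\mathsf L}\phi$ iff all formulas are in the language of $\mathsf L$ and every team satisfying all of $\Gamma$ satisfies $\phi$. $\phi$ is flat if for all teams $X$: $X\models\phi$ iff $\{v\}\models\phi$ for all $v\in X$. A substitution of $\mathsf L$ is a map on $\mathsf L$-formulas commuting with all connectives and atoms; it is flat if each $\sigma(p)$ is flat. For a set $\mathcal S$ of substitutions, a formula $\phi$ is $\mathcal S$-projective in $\mathsf L$ if there is $\sigma\in\mathcal S$ with $\vdash_{\mathsf L}\sigma(\phi)$, and $\phi,\sigma(p)\vdash_{\mathsf L}p$ and $\phi,p\vdash_{\mathsf L}\sigma(p)$ for all propositional variables $p$. *)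

From Stdlib Require Import List.
Import ListNotations.

Definition valuation := nat -> bool.
Definition team := valuation -> Prop.

(* Common syntax of PT; InqL formulas form a sublanguage (see in_lang). *)
Inductive form : Type :=
| Atom : nat -> form
| Bot : form
| Top : form
| Dep : list form -> form -> form
| Neg : form -> form                 (* PT's primitive negation *)
| And : form -> form -> form
| Tensor : form -> form -> form
| Vee : form -> form -> form
| Imp : form -> form -> form.

Definition subteam (Y X : team) : Prop := forall v, Y v -> X v.
Definition empty_team (X : team) : Prop := forall v, ~ X v.
Definition single (v : valuation) : team := fun w => w = v.

Fixpoint sat (phi : form) (X : team) {struct phi} : Prop :=
  match phi with
  | Atom p => forall v, X v -> v p = true
  | Bot => empty_team X
  | Top => True
  | Dep l psi =>
      (* X |= /\_i (phi_i \/ (phi_i -> bot)) -> (psi \/ (psi -> bot)) *)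
      forall Y, subteam Y X ->
        (fix allsat (l : list form) (Y : team) {struct l} : Prop :=
           match l with
           | [] => True
           | a :: l' =>
               (sat a Y \/ (forall Z, subteam Z Y -> sat a Z -> empty_team Z))
               /\ allsat l' Y
           end) l Y ->
        (sat psi Y \/ (forall Z, subteam Z Y -> sat psi Z -> empty_team Z))
  | Neg a => forall v, X v -> ~ sat a (single v)
  | And a b => sat a X /\ sat b X
  | Tensor a b => exists Y Z, (forall v, X v <-> (Y v \/ Z v)) /\ sat a Y /\ sat b Z
  | Vee a b => sat a X \/ sat b X
  | Imp a b => forall Y, subteam Y X -> sat a Y -> sat b Y
  end.

Inductive logic : Type := InqL | PT.

Fixpoint in_InqL (phi : form) : Prop :=
  match phi with
  | Atom _ | Bot | Top => True
  | And a b | Vee a b | Imp a b => in_InqL a /\ in_InqL b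
  | Dep _ _ | Neg _ | Tensor _ _ => False
  end.

Definition in_lang (L : logic) (phi : form) : Prop :=
  match L with
  | InqL => in_InqL phi
  | PT => True
  end.

Definition neg (L : logic) (phi : form) : form :=
  match L with
  | InqL => Imp phi Bot
  | PT => Neg phi
  end.

Definition entails (L : logic) (Gamma : list form) (phi : form) : Prop :=
  (forall g, In g Gamma -> in_lang L g) /\ in_lang L phi /\
  forall X : team, (forall g, In g Gamma -> sat g X) -> sat phi X.

Definition flat (phi : form) : Prop :=
  forall X : team, sat phi X <-> (forall v, X v -> sat phi (single v)).

Fixpoint subst (sigma : nat -> form) (phi : form) : form :=
  match phi with
  | Atom p => sigma p
  | Bot => Bot
  | Top => Top
  | Dep l psi => Dep (map (subst sigma) l) (subst sigma psi)
  | Neg a => Neg (subst sigma a)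
  | And a b => And (subst sigma a) (subst sigma b)
  | Tensor a b => Tensor (subst sigma a) (subst sigma b)
  | Vee a b => Vee (subst sigma a) (subst sigma b)
  | Imp a b => Imp (subst sigma a) (subst sigma b)
  end.

Definition is_subst_of (L : logic) (sigma : nat -> form) : Prop :=
  forall p, in_lang L (sigma p).

Definition flat_subst (L : logic) (sigma : nat -> form) : Prop :=
  is_subst_of L sigma /\ forall p, flat (sigma p).

Definition projective (L : logic) (S : (nat -> form) -> Prop) (phi : form) : Prop :=
  exists sigma, S sigma /\
    entails L [] (subst sigma phi) /\
    forall p, entails L [phi; sigma p] (Atom p) /\ entails L [phi; Atom p] (sigma p).

Fixpoint bigAnd (l : list form) : form :=
  match l with
  | [] => Top
  | [a] => a
  | a :: l' => And a (bigAnd l')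
  end.

Fixpoint bigVee (l : list form) : form :=
  match l with
  | [] => Bot
  | [a] => a
  | a :: l' => Vee a (bigVee l')
  end.

Definition lit (L : logic) (v : valuation) (p : nat) : form :=
  if v p then Atom p else neg L (Atom p).

Definition Theta (L : logic) (ps : list nat) (X : list valuation) : form :=
  neg L (neg L (bigVee (map (fun v => bigAnd (map (lit L v) ps)) X))).

(** Let [w] be any valuation of [X] and let [sigma] send [p] to
    [(Theta -> p) /\ (~ Theta -> p^(w p))].  On a singleton [{v}] the formula
    [sigma p] evaluates like the atom [p] under [v] when [v] satisfies [Theta],
    and like the constant [w p] otherwise.  Either way [sigma] turns the
    disjunction of [Theta] into one satisfied by some element of [X] ([v]'s
    match, or [w] itself), so [sigma(Theta)] holds on every singleton and,
    being flat, is valid.  Under [Theta] the first conjunct makes [sigma p] and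
    [p] equivalent, and the second conjunct is then vacuous. *)

From Stdlib Require Import List Classical.
Import ListNotations.

Lemma subteam_single (X : team) (v : valuation) : X v -> subteam (single v) X.
Proof. intros Xv w ->; exact Xv. Qed.

Lemma sat_empty_team (phi : form) (X : team) : empty_team X -> sat phi X.
Proof.
  revert X; induction phi; simpl; intros X HX.
  - intros v Xv; contradiction (HX v).
  - exact HX.
  - exact I.
  - intros Y HY _; right; intros Z HZ _ v Zv; exact (HX v (HY v (HZ v Zv))).
  - intros v Xv; contradiction (HX v).
  - auto.
  - exists X, X; split; [intros v; tauto | auto].
  - left; auto.
  - intros Y HY _; apply IHphi2; intros v Yv; exact (HX v (HY v Yv)).
Qed.

Lemma sat_subteam (phi : form) (X Y : team) : subteam Y X -> sat phi X -> sat phi Y.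
Proof.
  unfold subteam; revert X Y; induction phi; simpl; intros X Y HY H.
  - auto.
  - intros v Yv; exact (H v (HY v Yv)).
  - exact I.
  - intros Z HZ; apply H; unfold subteam; auto.
  - auto.
  - destruct H; split; eauto.
  - destruct H as [A [B [HAB [HA HB]]]].
    exists (fun v => A v /\ Y v), (fun v => B v /\ Y v); split.
    + intros v; split; [|tauto].
      intros Yv; destruct (proj1 (HAB v) (HY v Yv)); tauto.
    + split; [apply IHphi1 with A | apply IHphi2 with B]; auto; intros v []; auto.
  - destruct H; [left | right]; eauto.
  - intros Z HZ; apply H; unfold subteam in *; auto.
Qed.

Lemma sat_single_subteam (phi : form) (X : team) (v : valuation) :
  X v -> sat phi X -> sat phi (single v).
Proof. intros Xv; apply sat_subteam, subteam_single, Xv. Qed.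

Lemma sat_neg (L : logic) (phi : form) (X : team) :
  sat (neg L phi) X <-> forall v, X v -> ~ sat phi (single v).
Proof.
  destruct L; simpl; [split | tauto].
  - intros H v Xv Hphi; exact (H (single v) (subteam_single X v Xv) Hphi v eq_refl).
  - intros H Y HY HYphi v Yv; exact (H v (HY v Yv) (sat_single_subteam phi Y v Yv HYphi)).
Qed.

Lemma sat_neg_single (L : logic) (phi : form) (v : valuation) :
  sat (neg L phi) (single v) <-> ~ sat phi (single v).
Proof.
  rewrite sat_neg; split.
  - intros H; apply H; reflexivity.
  - intros H w ->; exact H.
Qed.

Lemma sat_Imp_single (phi psi : form) (v : valuation) :
  sat (Imp phi psi) (single v) <-> (sat phi (single v) -> sat psi (single v)).
Proof.
  simpl; split.
  - intros H; apply H; intros w Hw; exact Hw.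
  - intros H Y HY HYphi; destruct (classic (Y v)) as [Yv | nYv].
    + apply sat_subteam with (single v); auto.
      apply H, (sat_single_subteam phi Y v Yv HYphi).
    + apply sat_empty_team; intros u Yu; apply nYv; rewrite <- (HY u Yu); exact Yu.
Qed.

Lemma sat_Atom_single (p : nat) (v : valuation) : sat (Atom p) (single v) <-> v p = true.
Proof. simpl; split; [intros H; apply H; reflexivity | intros H w ->; exact H]. Qed.

Lemma sat_lit_single (L : logic) (u : valuation) (p : nat) (v : valuation) :
  sat (lit L u p) (single v) <-> v p = u p.
Proof.
  unfold lit; destruct (u p).
  - apply sat_Atom_single.
  - rewrite sat_neg_single, sat_Atom_single; destruct (v p); split; congruence.
Qed.

Lemma sat_bigAnd (l : list form) (X : team) :
  sat (bigAnd l) X <-> forall phi, In phi l -> sat phi X.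
Proof.
  induction l as [|a [|b l] IH].
  - simpl; split; [intros _ phi [] | intros _; exact I].
  - simpl; split; [intros H phi [<- | []]; exact H | auto].
  - change (sat a X /\ sat (bigAnd (b :: l)) X <-> forall phi, In phi (a :: b :: l) -> sat phi X).
    rewrite IH; split.
    + intros [Ha Hl] phi [<- | Hphi]; auto.
    + intros H; split; [apply H; left | intros phi Hphi; apply H; right]; auto.
Qed.

Lemma sat_bigVee_single (l : list form) (v : valuation) :
  sat (bigVee l) (single v) <-> exists phi, In phi l /\ sat phi (single v).
Proof.
  induction l as [|a [|b l] IH].
  - simpl; split; [intros H; contradiction (H v) | intros [phi [[] _]]]; reflexivity.
  - simpl; split; [intros H; exists a; auto | intros [phi [[<- | []] H]]; exact H].
  - change (sat a (single v) \/ sat (bigVee (b :: l)) (single v) <->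
            exists phi, In phi (a :: b :: l) /\ sat phi (single v)).
    rewrite IH; split.
    + intros [Ha | [phi [Hphi H]]]; [exists a | exists phi]; simpl; auto.
    + intros [phi [[<- | Hphi] H]]; [left | right; exists phi]; auto.
Qed.

Lemma sat_Theta_single (L : logic) (ps : list nat) (X : list valuation) (v : valuation) :
  sat (Theta L ps X) (single v) <-> exists u, In u X /\ forall p, In p ps -> v p = u p.
Proof.
  unfold Theta; rewrite 2!sat_neg_single, sat_bigVee_single; split.
  - intros H; apply NNPP in H; destruct H as [phi [Hphi Hv]].
    apply in_map_iff in Hphi; destruct Hphi as [u [<- Hu]].
    exists u; split; auto; intros p Hp.
    rewrite sat_bigAnd in Hv; apply (sat_lit_single L), Hv, in_map, Hp.
  - intros [u [Hu Hagree]] Hnone; apply Hnone.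
    exists (bigAnd (map (lit L u) ps)); split; [apply in_map_iff; eauto |].
    apply sat_bigAnd; intros phi Hphi; apply in_map_iff in Hphi.
    destruct Hphi as [p [<- Hp]]; apply sat_lit_single, Hagree, Hp.
Qed.

Lemma flat_Atom (p : nat) : flat (Atom p).
Proof.
  intros X; split; [intros H v Xv; exact (sat_single_subteam _ X v Xv H) |].
  intros H v Xv; exact (H v Xv v eq_refl).
Qed.

Lemma flat_Top : flat Top.
Proof. intros X; simpl; tauto. Qed.

Lemma flat_Bot : flat Bot.
Proof.
  intros X; split; [intros H v Xv; exact (sat_single_subteam _ X v Xv H) |].
  intros H v Xv; exact (H v Xv v eq_refl).
Qed.

Lemma flat_And (phi psi : form) : flat phi -> flat psi -> flat (And phi psi).
Proof.
  intros Hphi Hpsi X; simpl; rewrite (Hphi X), (Hpsi X); split.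
  - intros [H1 H2] v Xv; auto.
  - intros H; split; intros v Xv; apply (H v Xv).
Qed.

Lemma flat_Imp (phi psi : form) : flat psi -> flat (Imp phi psi).
Proof.
  intros Hpsi X; split; [intros H v Xv; exact (sat_single_subteam _ X v Xv H) |].
  intros H Y HY HYphi; apply Hpsi; intros v Yv.
  apply (proj1 (sat_Imp_single phi psi v) (H v (HY v Yv))).
  exact (sat_single_subteam phi Y v Yv HYphi).
Qed.

Lemma in_lang_Atom (L : logic) (p : nat) : in_lang L (Atom p).
Proof. destruct L; exact I. Qed.

Lemma in_lang_Top (L : logic) : in_lang L Top.
Proof. destruct L; exact I. Qed.

Lemma in_lang_Bot (L : logic) : in_lang L Bot.
Proof. destruct L; exact I. Qed.

Lemma in_lang_And (L : logic) (phi psi : form) :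
  in_lang L phi -> in_lang L psi -> in_lang L (And phi psi).
Proof. destruct L; simpl; tauto. Qed.

Lemma in_lang_Vee (L : logic) (phi psi : form) :
  in_lang L phi -> in_lang L psi -> in_lang L (Vee phi psi).
Proof. destruct L; simpl; tauto. Qed.

Lemma in_lang_Imp (L : logic) (phi psi : form) :
  in_lang L phi -> in_lang L psi -> in_lang L (Imp phi psi).
Proof. destruct L; simpl; tauto. Qed.

Lemma in_lang_neg (L : logic) (phi : form) : in_lang L phi -> in_lang L (neg L phi).
Proof. destruct L; simpl; tauto. Qed.

Lemma in_lang_bigAnd (L : logic) (l : list form) :
  (forall phi, In phi l -> in_lang L phi) -> in_lang L (bigAnd l).
Proof.
  induction l as [|a [|b l] IH]; intros H; [apply in_lang_Top | apply H; left; reflexivity |].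
  apply in_lang_And; [apply H; left | apply IH; intros phi Hphi; apply H; right]; auto.
Qed.

Lemma in_lang_bigVee (L : logic) (l : list form) :
  (forall phi, In phi l -> in_lang L phi) -> in_lang L (bigVee l).
Proof.
  induction l as [|a [|b l] IH]; intros H; [apply in_lang_Bot | apply H; left; reflexivity |].
  apply in_lang_Vee; [apply H; left | apply IH; intros phi Hphi; apply H; right]; auto.
Qed.

Lemma in_lang_Theta (L : logic) (ps : list nat) (X : list valuation) :
  in_lang L (Theta L ps X).
Proof.
  apply in_lang_neg, in_lang_neg, in_lang_bigVee; intros phi Hphi.
  apply in_map_iff in Hphi; destruct Hphi as [u [<- _]].
  apply in_lang_bigAnd; intros psi Hpsi; apply in_map_iff in Hpsi.
  destruct Hpsi as [p [<- _]]; unfold lit; destruct (u p).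
  - apply in_lang_Atom.
  - apply in_lang_neg, in_lang_Atom.
Qed.

Lemma in_lang_subst (L : logic) (sigma : nat -> form) (phi : form) :
  is_subst_of L sigma -> in_lang L phi -> in_lang L (subst sigma phi).
Proof.
  unfold is_subst_of; destruct L; simpl; [| auto].
  intros Hsigma; induction phi; simpl; intuition.
Qed.

Lemma subst_neg (L : logic) (sigma : nat -> form) (phi : form) :
  subst sigma (neg L phi) = neg L (subst sigma phi).
Proof. destruct L; reflexivity. Qed.

Lemma subst_bigAnd (sigma : nat -> form) (l : list form) :
  subst sigma (bigAnd l) = bigAnd (map (subst sigma) l).
Proof.
  induction l as [|a [|b l] IH]; [reflexivity | reflexivity |].
  change (And (subst sigma a) (subst sigma (bigAnd (b :: l))) = bigAnd (map (subst sigma) (a :: b :: l))).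
  rewrite IH; reflexivity.
Qed.

Lemma subst_bigVee (sigma : nat -> form) (l : list form) :
  subst sigma (bigVee l) = bigVee (map (subst sigma) l).
Proof.
  induction l as [|a [|b l] IH]; [reflexivity | reflexivity |].
  change (Vee (subst sigma a) (subst sigma (bigVee (b :: l))) = bigVee (map (subst sigma) (a :: b :: l))).
  rewrite IH; reflexivity.
Qed.

Lemma sat_subst_lit_single (L : logic) (sigma : nat -> form) (u : valuation) (p : nat) (v : valuation) :
  sat (subst sigma (lit L u p)) (single v) <-> (sat (sigma p) (single v) <-> u p = true).
Proof.
  unfold lit; destruct (u p); simpl subst.
  - split; [split; auto | intros H; apply H; reflexivity].
  - rewrite subst_neg, sat_neg_single; simpl subst; split; [split; [auto | discriminate] |].
    intros H Hsigma; discriminate (proj1 H Hsigma).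
Qed.

Section Projective_substitution.

Variables (L : logic) (ps : list nat) (X : list valuation) (w : valuation).

Definition proj_subst (p : nat) : form :=
  And (Imp (Theta L ps X) (Atom p))
      (Imp (neg L (Theta L ps X)) (if w p then Top else Bot)).

Lemma sat_proj_subst_single (p : nat) (v : valuation) :
  sat (proj_subst p) (single v) <->
  (sat (Theta L ps X) (single v) -> v p = true) /\
  (~ sat (Theta L ps X) (single v) -> w p = true).
Proof.
  unfold proj_subst; change (sat (And ?a ?b) ?Y) with (sat a Y /\ sat b Y).
  rewrite 2!sat_Imp_single, sat_Atom_single, sat_neg_single.
  destruct (w p); simpl; split; intros [H1 H2]; split; auto.
  - intros Hn; contradiction (H2 Hn v); reflexivity.
  - intros Hn; discriminate (H2 Hn).
Qed.

Lemma flat_subst_proj_subst : flat_subst L proj_subst.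
Proof.
  split; intros p; unfold proj_subst.
  - apply in_lang_And; apply in_lang_Imp;
      auto using in_lang_Theta, in_lang_neg, in_lang_Atom.
    destruct (w p); [apply in_lang_Top | apply in_lang_Bot].
  - apply flat_And; apply flat_Imp; [apply flat_Atom |].
    destruct (w p); [apply flat_Top | apply flat_Bot].
Qed.

Lemma sat_subst_literals_single (u : valuation) (v : valuation) :
  (forall p, In p ps -> sat (proj_subst p) (single v) <-> u p = true) ->
  sat (subst proj_subst (bigAnd (map (lit L u) ps))) (single v).
Proof.
  intros Hu; rewrite subst_bigAnd, map_map, sat_bigAnd; intros phi Hphi.
  apply in_map_iff in Hphi; destruct Hphi as [p [<- Hp]].
  apply sat_subst_lit_single, Hu, Hp.
Qed.

Hypothesis w_in_X : In w X.

Lemma valid_subst_Theta : entails L [] (subst proj_subst (Theta L ps X)).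
Proof.
  split; [intros g [] | split].
  - apply in_lang_subst; [apply flat_subst_proj_subst | apply in_lang_Theta].
  - intros Y _; unfold Theta; rewrite 2!subst_neg, sat_neg; intros v _.
    rewrite sat_neg_single, subst_bigVee, sat_bigVee_single, map_map.
    intros Hnone; apply Hnone.
    destruct (classic (sat (Theta L ps X) (single v))) as [HT | HT].
    + destruct (proj1 (sat_Theta_single L ps X v) HT) as [u [Hu Hagree]].
      exists (subst proj_subst (bigAnd (map (lit L u) ps))); split; [apply in_map_iff; eauto |].
      apply sat_subst_literals_single; intros p Hp.
      rewrite sat_proj_subst_single, <- Hagree by exact Hp; tauto.
    + exists (subst proj_subst (bigAnd (map (lit L w) ps))); split; [apply in_map_iff; eauto |].
      apply sat_subst_literals_single; intros p _.
      rewrite sat_proj_subst_single; tauto.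
Qed.

Lemma Theta_proj_subst_entails_Atom (p : nat) :
  entails L [Theta L ps X; proj_subst p] (Atom p).
Proof.
  split; [| split; [apply in_lang_Atom |]].
  - intros g [<- | [<- | []]]; [apply in_lang_Theta | apply flat_subst_proj_subst].
  - intros Y H; destruct (H _ (or_intror (or_introl eq_refl))) as [HTp _].
    exact (HTp Y (fun v Yv => Yv) (H _ (or_introl eq_refl))).
Qed.

Lemma Theta_Atom_entails_proj_subst (p : nat) :
  entails L [Theta L ps X; Atom p] (proj_subst p).
Proof.
  split; [| split; [apply flat_subst_proj_subst |]].
  - intros g [<- | [<- | []]]; [apply in_lang_Theta | apply in_lang_Atom].
  - intros Y H; pose proof (H _ (or_introl eq_refl)) as HT.
    pose proof (H _ (or_intror (or_introl eq_refl))) as Hp.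
    split; intros Z HZ HZ'.
    + exact (sat_subteam _ Y Z HZ Hp).
    + apply sat_empty_team; intros v Zv; rewrite sat_neg in HZ'.
      exact (HZ' v Zv (sat_single_subteam _ Y v (HZ v Zv) HT)).
Qed.

End Projective_substitution.

(* The witness substitution is correct for arbitrary lists [ps]. *)
Theorem lemma4p3 (L : logic) (ps : list nat) (X : list valuation) :
  NoDup ps -> X <> nil ->
  projective L (flat_subst L) (Theta L ps X).
Proof.
  intros _ HX; destruct X as [|w X']; [contradiction HX; reflexivity |].
  exists (proj_subst L ps (w :: X') w); split; [| split].
  - apply flat_subst_proj_subst.
  - apply valid_subst_Theta; left; reflexivity.
  - intros p; split.
    + apply Theta_proj_subst_entails_Atom.
    + apply Theta_Atom_entails_proj_subst.
Qed.
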